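(* Let $A,B,C,D$ be real random variables on a common probability space with finite second moments, $\mathrm{Var}(B)>0$, $\mathrm{Var}(D)>0$, $|\mathrm{Corr}(B,D)|<1$, $\mathbb{E}[A]\neq0$, $\mathbb{E}[C]\neq 0$, and set $R=\mathbb{E}[A]/\mathbb{E}[C]$. Let $n\ge1$ and let $(A_i,B_i,C_i,D_i)_{i=1,\dots,n}$ be i.i.d. copies of $(A,B,C,D)$. For $\alpha,\beta\in\mathbb{R}$ put $N_\alpha=\overline{A_n}+\alpha(\mathbb{E}[B]-\overline{B_n})$ and $M_\beta=\overline{C_n}+\beta(\mathbb{E}[D]-\overline{D_n})$. Let $$\alpha_o=\frac{\mathrm{Var}(D)\mathrm{Cov}(A,B)-R\,\mathrm{Var}(D)\mathrm{Cov}(B,C)+R\,\mathrm{Cov}(B,D)\mathrm{Cov}(C,D)-\mathrm{Cov}(B,D)\mathrm{Cov}(A,D)}{\mathrm{Var}(B)\mathrm{Var}(D)-\mathrm{Cov}(B,D)^2},$$ $$\beta_o=\frac{\mathrm{Cov}(B,D)\mathrm{Cov}(A,B)-R\,\mathrm{Cov}(B,D)\mathrm{Cov}(B,C)+R\,\mathrm{Var}(B)\mathrm{Cov}(C,D)-\mathrm{Var}(B)\mathrm{Cov}(A,D)}{R\big(\mathrm{Var}(B)\mathrm{Var}(D)-\mathrm{Cov}(B,D)^2\big)}.$$ Then $$\Phi(N_{\alpha_o},M_{\beta_o})-\Phi(\overline{A_n},\overline{C_n})=-\frac{1}{n\,\mathbb{E}[C]^2}\,\frac{\mathrm{Var}\Big(\big(R\,\mathrm{Cov}(B,C)-\mathrm{Cov}(A,B)\big)D-\big(R\,\mathrm{Cov}(C,D)-\mathrm{Cov}(A,D)\big)B\Big)}{\mathrm{Var}(B)\mathrm{Var}(D)-\mathrm{Cov}(B,D)^2}\le0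 .$$
   Context: For a random variable $X$, $\overline{X_n}=\frac1n\sum_{i=1}^n X_i$ denotes the sample mean of the i.i.d. copies $X_1,\dots,X_n$. For real random variables $X,Z$ with finite second moments and $\mathbb{E}[Z]\neq0$, define the first-order (delta-method) approximation of the variance of the ratio $X/Z$: $$\Phi(X,Z)=\frac{\mathrm{Var}(X)}{\mathbb{E}[Z]^2}+\frac{\mathbb{E}[X]^2}{\mathbb{E}[Z]^4}\mathrm{Var}(Z)-2\frac{\mathbb{E}[X]}{\mathbb{E}[Z]^3}\mathrm{Cov}(X,Z).$$ $\Phi(N_\alpha,M_\beta)$ is the paper's variance of the CV/CV ratio estimator $N_\alpha/M_\beta$ of $R$, and $\Phi(\overline{A_n},\overline{C_n})$ that of the Monte Carlo ratio estimator $\overline{A_n}/\overline{C_n}$; $\mathbb{E}[B],\mathbb{E}[D]$ are known constants. $\mathrm{Corr}(B,D)=\mathrm{Cov}(B,D)/\sqrt{\mathrm{Var}(B)\mathrm{Var}(D)}$. *)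

From HB Require Import structures.
From mathcomp Require Import all_boot all_order all_algebra.
From mathcomp Require Import all_classical all_reals all_analysis.
Set Implicit Arguments. Unset Strict Implicit. Unset Printing Implicit Defensive.
Import Order.TTheory GRing.Theory Num.Theory.
Import numFieldNormedType.Exports.
Local Open Scope classical_set_scope.
Local Open Scope ring_scope.

Section defs.
Context {d : measure_display} {T : measurableType d} {R : realType}.
Variable P : probability T R.

(* real-valued expectation, variance, covariance (finite under finite
   second moments, so [fine] loses nothing) *)
Definition Ex (X : T -> R) : R := fine ('E_P[X])%E.
Definition Var (X : T -> R) : R := fine ('V_P[X])%E.
Definition Cov (X Y : T -> R) : R := fine (covariance P X Y).
Definition Corr (X Y : T -> R) : R := Cov X Y / Num.sqrt (Var X * Var Y).

(* first-order (delta-method) variance of the ratio X/Z *)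
Definition Phi (X Z : T -> R) : R :=
  Var X / Ex Z ^+ 2 + Ex X ^+ 2 / Ex Z ^+ 4 * Var Z
  - 2 * (Ex X / Ex Z ^+ 3) * Cov X Z.

Definition smean (n : nat) (X : 'I_n -> T -> R) : T -> R :=
  fun t => n%:R^-1 * \sum_(i < n) X i t.

Definition vec4 (A B C D : T -> R) : T -> R * R * R * R :=
  fun t => (A t, B t, C t, D t).

Definition iid_copies (n : nat) (A B C D : T -> R)
    (Ai Bi Ci Di : 'I_n -> T -> R) : Prop :=
  (forall i, measurable_fun setT (Ai i) /\ measurable_fun setT (Bi i) /\
             measurable_fun setT (Ci i) /\ measurable_fun setT (Di i)) /\
  (forall i (S : set (R * R * R * R)), measurable S ->
     P (vec4 (Ai i) (Bi i) (Ci i) (Di i) @^-1` S) =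
     P (vec4 A B C D @^-1` S)) /\
  (forall S : 'I_n -> set (R * R * R * R), (forall i, measurable (S i)) ->
     P (\bigcap_(i in [set: 'I_n]) (vec4 (Ai i) (Bi i) (Ci i) (Di i) @^-1` S i))
     = (\prod_(i < n) P (vec4 (Ai i) (Bi i) (Ci i) (Di i) @^-1` S i))%E).

End defs.

From HB Require Import structures.
From mathcomp Require Import all_boot all_order all_algebra.
From mathcomp Require Import all_classical all_reals all_analysis measurable_realfun.
From mathcomp Require Import ring lra.
Set Implicit Arguments. Unset Strict Implicit. Unset Printing Implicit Defensive.
Import Order.TTheory GRing.Theory Num.Theory.
Import numFieldNormedType.Exports.
Local Open Scope classical_set_scope.
Local Open Scope ring_scope.

(* With U := A - R C, the delta-method variance is the variance of a linearisation,
   Phi (X, Z) = Var (X - (E X / E Z) Z) / (E Z)^2, and control variates keep the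
   means, so Phi (N_a, M_b) = Var (U - a B + R b D) / (n (E C)^2): the factor 1/n
   holds because the copies are identically distributed and pairwise uncorrelated
   (independent).  The coefficients (alpha_o, - R beta_o) solve the normal equations
   of the least-squares regression of U on (B, D), whose residual variance is
   Var U - Var (Cov (U, D) B - Cov (U, B) D) / (Var B Var D - Cov (B, D)^2); the
   denominator is positive because |Corr (B, D)| < 1. *)

Section moments.
Context d (T : measurableType d) (R : realType) (P : probability T R).
Local Notation L2 := (Lfun P 2%:E).
Implicit Types (X Y Z : T -> R) (a k : R).

Lemma Lfun2_Lfun1 X : X \in L2 -> X \in Lfun P 1.
Proof. exact/Lfun_subset12/fin_num_measure. Qed.

Lemma Lfun2D X Y : X \in L2 -> Y \in L2 -> X \+ Y \in L2.
Proof. by move=> X2 Y2; rewrite rpredD// lee1n. Qed.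

Lemma Lfun2B X Y : X \in L2 -> Y \in L2 -> X \- Y \in L2.
Proof. by move=> X2 Y2; rewrite rpredB// lee1n. Qed.

Lemma Lfun2Z a X : X \in L2 -> a \o* X \in L2.
Proof. exact/Lfun_scale/ler1n. Qed.

Lemma EFin_Ex X : X \in Lfun P 1 -> 'E_P[X]%E = (Ex P X)%:E.
Proof. by move=> X1; rewrite fineK// expectation_fin_num. Qed.

Lemma EFin_Cov X Y : X \in L2 -> Y \in L2 -> covariance P X Y = (Cov P X Y)%:E.
Proof.
by move=> X2 Y2; rewrite fineK// covariance_fin_num ?Lfun2_mul_Lfun1 ?Lfun2_Lfun1.
Qed.

Lemma EFin_Var X : X \in L2 -> variance P X = (Var P X)%:E.
Proof. by move=> X2; rewrite /variance EFin_Cov. Qed.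

Lemma Var_ge0 X : 0 <= Var P X.
Proof. exact/fine_ge0/variance_ge0. Qed.

Lemma CovC X Y : Cov P X Y = Cov P Y X.
Proof. by rewrite /Cov covarianceC. Qed.

Lemma CovDl X Y Z : X \in L2 -> Y \in L2 -> Z \in L2 ->
  Cov P (X \+ Y) Z = Cov P X Z + Cov P Y Z.
Proof.
by move=> X2 Y2 Z2; apply: EFin_inj; rewrite -EFin_Cov ?Lfun2D// covarianceDl// !EFin_Cov.
Qed.

Lemma CovBl X Y Z : X \in L2 -> Y \in L2 -> Z \in L2 ->
  Cov P (X \- Y) Z = Cov P X Z - Cov P Y Z.
Proof.
by move=> X2 Y2 Z2; apply: EFin_inj; rewrite -EFin_Cov ?Lfun2B// covarianceBl// !EFin_Cov.
Qed.

Lemma CovZl a X Y : X \in L2 -> Y \in L2 -> Cov P (a \o* X) Y = a * Cov P X Y.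
Proof.
move=> X2 Y2; apply: EFin_inj.
rewrite -EFin_Cov ?Lfun2Z// covarianceZl ?Lfun2_mul_Lfun1 ?Lfun2_Lfun1//.
by rewrite EFin_Cov.
Qed.

Lemma CovZr a X Y : X \in L2 -> Y \in L2 -> Cov P X (a \o* Y) = a * Cov P X Y.
Proof. by move=> X2 Y2; rewrite CovC CovZl// CovC. Qed.

Lemma VarB X Y : X \in L2 -> Y \in L2 ->
  Var P (X \- Y) = Var P X + Var P Y - 2 * Cov P X Y.
Proof.
by move=> X2 Y2; apply: EFin_inj; rewrite -EFin_Var ?Lfun2B// varianceB// !EFin_Var// EFin_Cov.
Qed.

Lemma VarZ a X : X \in L2 -> Var P (a \o* X) = a ^+ 2 * Var P X.
Proof.
by move=> X2; apply: EFin_inj; rewrite -EFin_Var ?Lfun2Z// varianceZ// EFin_Var.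
Qed.

Lemma ExZ a X : X \in Lfun P 1 -> Ex P (a \o* X) = a * Ex P X.
Proof.
by move=> X1; apply: EFin_inj; rewrite -EFin_Ex ?Lfun_scale// expectationZl// EFin_Ex.
Qed.

Lemma CovE X Y : X \in L2 -> Y \in L2 ->
  Cov P X Y = Ex P (X \* Y) - Ex P X * Ex P Y.
Proof.
move=> X2 Y2; apply: EFin_inj.
rewrite -EFin_Cov// covarianceE ?Lfun2_mul_Lfun1 ?Lfun2_Lfun1//.
by rewrite !EFin_Ex ?Lfun2_mul_Lfun1 ?Lfun2_Lfun1.
Qed.

Lemma Var_cst_add k X : X \in L2 -> Var P (cst k \+ X) = Var P X.
Proof. by move=> X2; rewrite /Var varianceD_cst_l. Qed.

Lemma Cov_suml I (s : seq I) (F : I -> T -> R) Z :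
  (forall i, F i \in L2) -> Z \in L2 ->
  Cov P (\sum_(i <- s) F i) Z = \sum_(i <- s) Cov P (F i) Z.
Proof.
move=> F2 Z2; elim: s => [|i s IH]; first by rewrite !big_nil /Cov covariance_cst_l.
by rewrite !big_cons CovDl ?IH ?rpred_sum ?lee1n.
Qed.

Lemma Ex_sum I (s : seq I) (F : I -> T -> R) : (forall i, F i \in Lfun P 1) ->
  Ex P (\sum_(i <- s) F i) = \sum_(i <- s) Ex P (F i).
Proof.
move=> F1; elim: s => [|i s IH]; first by rewrite !big_nil /Ex expectation_cst.
by rewrite !big_cons /Ex expectationD ?fineD ?expectation_fin_num ?rpred_sum// -IH.
Qed.

Lemma Cov_sqr_lt_VarM X Y : 0 < Var P X -> 0 < Var P Y -> `|Corr P X Y| < 1 ->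
  Cov P X Y ^+ 2 < Var P X * Var P Y.
Proof.
move=> X0 Y0; have XY0 : 0 < Var P X * Var P Y by rewrite mulr_gt0.
rewrite /Corr normrM normfV [X in _ / X]gtr0_norm ?sqrtr_gt0// ltr_pdivrMr ?sqrtr_gt0// mul1r.
move=> lt_cov; rewrite -real_normK ?num_real// -[ltRHS]sqr_sqrtr ?ltW//.
by rewrite ltr_pXn2r ?nnegrE ?sqrtr_ge0.
Qed.

End moments.

Section delta_method.
Context d (T : measurableType d) (R : realType) (P : probability T R).
Local Notation L2 := (Lfun P 2%:E).
Implicit Types (X Y Z : T -> R) (a k : R).

Lemma control_variateE X Y a k :
  (fun t => X t + a * (k - Y t)) = X \+ a \o* (cst k \- Y).
Proof. by apply/funext => t /=; rewrite mulrC. Qed.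

Lemma Lfun2_control_variate X Y a k : X \in L2 -> Y \in L2 ->
  (fun t => X t + a * (k - Y t)) \in L2.
Proof. by move=> X2 Y2; rewrite control_variateE Lfun2D ?Lfun2Z ?Lfun2B ?Lfun_cst. Qed.

Lemma Ex_control_variate X Y a : X \in Lfun P 1 -> Y \in Lfun P 1 ->
  Ex P (fun t => X t + a * (Ex P Y - Y t)) = Ex P X.
Proof.
move=> X1 Y1; have cY1 : cst (Ex P Y) \- Y \in Lfun P 1 by rewrite rpredB// Lfun_cst.
rewrite control_variateE /Ex expectationD ?Lfun_scale// expectationZl//.
rewrite expectationB ?Lfun_cst// expectation_cst.
by rewrite fineK ?subee ?expectation_fin_num// mule0 adde0.
Qed.

Lemma Phi_VarE X Z : X \in L2 -> Z \in L2 ->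
  Phi P X Z = Var P (X \- (Ex P X / Ex P Z) \o* Z) / Ex P Z ^+ 2.
Proof.
move=> X2 Z2; rewrite VarB ?Lfun2Z// VarZ// CovZr// /Phi.
have [->|EZ0] := eqVneq (Ex P Z) 0; last by field.
by rewrite !(expr0n, invr0, mulr0, mul0r, addr0, subr0).
Qed.

Lemma Phi_control_variates A B C D a b :
  A \in L2 -> B \in L2 -> C \in L2 -> D \in L2 ->
  Phi P (fun t => A t + a * (Ex P B - B t)) (fun t => C t + b * (Ex P D - D t)) =
  Var P (A \- a \o* B \- (Ex P A / Ex P C) \o* (C \- b \o* D)) / Ex P C ^+ 2.
Proof.
move=> A2 B2 C2 D2.
rewrite Phi_VarE ?Lfun2_control_variate// !Ex_control_variate ?Lfun2_Lfun1//.
set r := Ex P A / Ex P C.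
congr (_ / _); rewrite -[RHS](Var_cst_add (a * Ex P B - r * (b * Ex P D))).
  by congr (Var P _); apply/funext => t /=; ring.
by rewrite !Lfun2B ?Lfun2Z ?Lfun2B ?Lfun2Z.
Qed.

Lemma Var_regression_residual U B D a g :
  U \in L2 -> B \in L2 -> D \in L2 ->
  Var P B * Var P D - Cov P B D ^+ 2 != 0 ->
  a * Var P B + g * Cov P B D = Cov P U B ->
  a * Cov P B D + g * Var P D = Cov P U D ->
  Var P (U \- a \o* B \- g \o* D) =
  Var P U - Var P (Cov P U D \o* B \- Cov P U B \o* D) /
            (Var P B * Var P D - Cov P B D ^+ 2).
Proof.
move=> U2 B2 D2 den0 normalB normalD.
have aB2 : a \o* B \in L2 by exact: Lfun2Z.
have gD2 : g \o* D \in L2 by exact: Lfun2Z.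
rewrite VarB ?Lfun2B// VarB// CovBl// !VarZ// !CovZr// CovZl//.
rewrite VarB ?Lfun2Z// !VarZ// CovZl ?Lfun2Z// CovZr// -normalB -normalD.
by field.
Qed.

Lemma Phi_optimal_control_variates A B C D :
  A \in L2 -> B \in L2 -> C \in L2 -> D \in L2 -> Ex P A != 0 -> Ex P C != 0 ->
  0 < Var P B * Var P D - Cov P B D ^+ 2 ->
  let r := Ex P A / Ex P C in
  let den := Var P B * Var P D - Cov P B D ^+ 2 in
  let alpha_o := (Var P D * Cov P A B - r * Var P D * Cov P B C
                  + r * Cov P B D * Cov P C D - Cov P B D * Cov P A D) / den in
  let beta_o := (Cov P B D * Cov P A B - r * Cov P B D * Cov P B C
                 + r * Var P B * Cov P C D - Var P B * Cov P A D) / (r * den) in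
  let W := fun t => (r * Cov P B C - Cov P A B) * D t
                    - (r * Cov P C D - Cov P A D) * B t in
  Phi P (fun t => A t + alpha_o * (Ex P B - B t)) (fun t => C t + beta_o * (Ex P D - D t))
  - Phi P A C = - (Var P W / den) / Ex P C ^+ 2.
Proof.
move=> A2 B2 C2 D2 EA0 EC0 den_gt0 r den alpha_o beta_o W.
pose U := A \- r \o* C.
have U2 : U \in L2 by rewrite Lfun2B ?Lfun2Z.
have CovUB : Cov P U B = Cov P A B - r * Cov P B C.
  by rewrite CovBl ?Lfun2Z// CovZl// (CovC P C).
have CovUD : Cov P U D = Cov P A D - r * Cov P C D by rewrite CovBl ?Lfun2Z// CovZl.
have r0 : r != 0 by rewrite mulf_neq0 ?invr_eq0.
have normalB : alpha_o * Var P B + (- (r * beta_o)) * Cov P B D = Cov P U B.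
  by rewrite CovUB /alpha_o /beta_o /den; field; rewrite r0 gt_eqF.
have normalD : alpha_o * Cov P B D + (- (r * beta_o)) * Var P D = Cov P U D.
  by rewrite CovUD /alpha_o /beta_o /den; field; rewrite r0 gt_eqF.
have -> : W = Cov P U D \o* B \- Cov P U B \o* D.
  by apply/funext => t /=; rewrite CovUB CovUD /W; ring.
rewrite Phi_control_variates// Phi_VarE//.
have -> : A \- alpha_o \o* B \- r \o* (C \- beta_o \o* D) =
          U \- alpha_o \o* B \- (- (r * beta_o)) \o* D.
  by apply/funext => t; rewrite /U /=; ring.
rewrite Var_regression_residual ?gt_eqF// -/r -/U -/den.
by field; rewrite EC0 gt_eqF.
Qed.

End delta_method.

Section same_law.
Local Open Scope ereal_scope.
Context d (T : measurableType d) (R : realType) (P : probability T R).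
Context d' (S : measurableType d').

Definition same_law (X Y : T -> S) :=
  forall A, measurable A -> P (X @^-1` A) = P (Y @^-1` A).

Variables (X Y : T -> S) (mX : measurable_fun setT X) (mY : measurable_fun setT Y).
Hypothesis XY : same_law X Y.

Lemma ge0_integral_same_law (h : S -> \bar R) : measurable_fun setT h ->
  (forall s, 0 <= h s) -> \int[P]_t h (X t) = \int[P]_t h (Y t).
Proof.
move=> mh h0; have h0' : {in setT, forall s, 0 <= h s} by move=> s _.
have := ge0_integral_pushforward mX P measurableT mh h0'.
have := ge0_integral_pushforward mY P measurableT mh h0'.
rewrite !preimage_setT => <- <-.
by apply: eq_measure_integral => A mA _; exact: XY.
Qed.

Lemma integral_same_law (h : S -> \bar R) : measurable_fun setT h ->
  \int[P]_t h (X t) = \int[P]_t h (Y t).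
Proof.
move=> mh; rewrite [LHS]integralE [RHS]integralE.
rewrite (funepos_comp h X) (funeneg_comp h X) (funepos_comp h Y) (funeneg_comp h Y).
by rewrite !ge0_integral_same_law//; [exact: measurable_funeneg|exact: measurable_funepos].
Qed.

Lemma expectation_same_law (f : S -> R) : measurable_fun setT f ->
  'E_P[f \o X] = 'E_P[f \o Y].
Proof.
by move=> mf; rewrite unlock; apply: (@integral_same_law (EFin \o f)); exact/measurable_EFinP.
Qed.

Lemma covariance_same_law (f g : S -> R) :
  measurable_fun setT f -> measurable_fun setT g ->
  covariance P (f \o X) (g \o X) = covariance P (f \o Y) (g \o Y).
Proof.
move=> mf mg; rewrite !covariance.unlock (expectation_same_law mf) (expectation_same_law mg).
pose cf := fine 'E_P[f \o Y]; pose cg := fine 'E_P[g \o Y].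
apply: (@expectation_same_law (fun s => (f s - cf) * (g s - cg))%R).
by apply: measurable_funM; apply: measurable_funB.
Qed.

Lemma Lfun_same_law (f : S -> R) (r : R) : measurable_fun setT f ->
  f \o Y \in Lfun P r%:E -> f \o X \in Lfun P r%:E.
Proof.
move=> mf; rewrite !inE => /andP[_]; rewrite !inE /= /finite_norm Lnorm.unlock.
rewrite -(ge0_integral_same_law (h := fun s => `|(f s)%:E| `^ r)) => [fX||].
- apply/andP; split; first by rewrite inE; exact: measurableT_comp.
  by rewrite inE /= /finite_norm Lnorm.unlock.
- apply: (measurableT_comp (measurable_poweR _)).
  exact/measurableT_comp/measurable_EFinP.
- by move=> s; exact: poweR_ge0.
Qed.
End same_law.

Section independence.
Local Open Scope ereal_scope.
Context d (T : measurableType d) (R : realType) (P : probability T R).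

Definition independent_rv d1 d2 (S1 : measurableType d1) (S2 : measurableType d2)
    (X : T -> S1) (Y : T -> S2) :=
  forall A B, measurable A -> measurable B ->
  P (X @^-1` A `&` Y @^-1` B) = P (X @^-1` A) * P (Y @^-1` B).

Lemma independent_rv_comp d1 d2 d1' d2' (S1 : measurableType d1) (S2 : measurableType d2)
    (S1' : measurableType d1') (S2' : measurableType d2')
    (X : T -> S1) (Y : T -> S2) (f : S1 -> S1') (g : S2 -> S2') :
  measurable_fun setT f -> measurable_fun setT g ->
  independent_rv X Y -> independent_rv (f \o X) (g \o Y).
Proof.
move=> mf mg XY A B mA mB.
by apply: (XY (f @^-1` A) (g @^-1` B)); rewrite -[_ @^-1` _]setTI; [exact: mf|exact: mg].
Qed.

Lemma independent_rv_pairwise d' (S : measurableType d') n (V : 'I_n -> T -> S) :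
  (forall E : 'I_n -> set S, (forall i, measurable (E i)) ->
    P (\bigcap_(i in [set: 'I_n]) V i @^-1` E i) = \prod_(i < n) P (V i @^-1` E i)) ->
  forall i j, i != j -> independent_rv (V i) (V j).
Proof.
move=> Vmut i j ij A B mA mB.
pose E k := if k == i then A else if k == j then B else setT.
have mE k : measurable (E k) by rewrite /E; case: ifP => _ //; case: ifP.
have ji : (j == i) = false by rewrite eq_sym (negbTE ij).
have -> : V i @^-1` A `&` V j @^-1` B = \bigcap_(k in [set: 'I_n]) V k @^-1` E k.
  apply/seteqP; split => [t [At Bt] k _|t Et]; rewrite /E.
    by case: eqP => [->//|_]; case: eqP => [->//|].
  by split; [have := Et i I|have := Et j I]; rewrite /E ?eqxx ?ji.
rewrite Vmut// (bigD1 i)// (bigD1 j) 1?eq_sym//= big1 ?mule1.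
  by rewrite /E eqxx ji eqxx.
by move=> k /andP[ki kj]; rewrite /E (negbTE ki) (negbTE kj) preimage_setT probability_setT.
Qed.

Section expectationM.
Variables (X Y : T -> R) (mX : measurable_fun setT X) (mY : measurable_fun setT Y).
Hypothesis XY : independent_rv X Y.
Let X' : {mfun T >-> R} := HB.pack X (isMeasurableFun.Build _ _ _ _ _ mX).
Let Y' : {mfun T >-> R} := HB.pack Y (isMeasurableFun.Build _ _ _ _ _ mY).
Let XY' : {mfun T >-> (R * R)%type} :=
  HB.pack (fun t => (X t, Y t)) (isMeasurableFun.Build _ _ _ _ _ (measurable_fun_pair mX mY)).

Let distribution_pair_independent (A : set (R * R)%type) : measurable A ->
  (distribution P X' \x distribution P Y') A = distribution P XY' A.
Proof.
move=> mA; apply: product_measure_unique mA => B C mB mC.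
exact: XY.
Qed.

Lemma expectationM_independent : (X \in Lfun P 1)%R -> (Y \in Lfun P 1)%R ->
  'E_P[X \* Y] = 'E_P[X] * 'E_P[Y].
Proof.
move=> /Lfun1_integrable iX /Lfun1_integrable iY.
pose PX := distribution P X'; pose PY := distribution P Y'.
have iPX : PX.-integrable setT EFin by apply: (integrable_pushforward mX).
have iPY : PY.-integrable setT EFin by apply: (integrable_pushforward mY).
pose h (z : R * R) := (z.1 * z.2)%:E.
have mh : measurable_fun setT h by apply/measurable_EFinP/measurable_funM.
have mabs : measurable_fun setT (fun y : R => `|y|%:E) by exact/measurable_EFinP.
have ih : (PX \x PY).-integrable setT h.
  apply/integrable12ltyP => //; rewrite /h /=.
  under eq_integral => x _ do under eq_integral => y _ do rewrite normrM EFinM.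
  under eq_integral => x _ do rewrite ge0_integralZl//.
  rewrite ge0_integralZr//; last by apply: integral_ge0.
  case/integrableP: iPX => _ iPX'; case/integrableP: iPY => _ iPY'.
  by rewrite lte_mul_pinfty// ?integral_ge0// ge0_fin_numE// integral_ge0.
have [EX EY] : 'E_P[X] = \int[PX]_x x%:E /\ 'E_P[Y] = \int[PY]_y y%:E.
  by rewrite !unlock /PX /PY !integral_distribution.
have PXY (f : R * R -> \bar R) :
    \int[PX \x PY]_z f z = \int[distribution P XY']_z f z.
  by apply: eq_measure_integral => A mA _; exact: distribution_pair_independent.
have iXY : P.-integrable setT (h \o XY').
  apply/integrableP; split; first exact: measurableT_comp.
  case/integrableP: ih => _; rewrite PXY ge0_integral_distribution//.
  exact: measurableT_comp.
have EXY : 'E_P[X \* Y] = \int[PX \x PY]_z h z.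
  by rewrite PXY unlock integral_distribution.
rewrite EXY EX EY -(integral12_prod_meas1 ih) /fubini_F /h /=.
under eq_integral => x _ do under eq_integral => y _ do rewrite EFinM.
under eq_integral => x _ do rewrite integralZl//.
have /fineK <- := integrable_fin_num measurableT iPY.
by rewrite integralZr.
Qed.
End expectationM.
End independence.

Section iid_sample_mean.
Context d (T : measurableType d) (R : realType) (P : probability T R).
Context d' (S : measurableType d').
Local Notation L2 := (Lfun P 2%:E).
Variables (n : nat) (V : 'I_n -> T -> S) (V0 : T -> S).
Hypotheses (n_gt0 : (0 < n)%N) (mV : forall i, measurable_fun setT (V i))
  (mV0 : measurable_fun setT V0) (V_law : forall i, same_law P (V i) V0)
  (V_indep : forall i j, i != j -> independent_rv P (V i) (V j)).
Implicit Types f g : S -> R.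

Let n_neq0 : n%:R != 0 :> R. Proof. by rewrite pnatr_eq0 -lt0n. Qed.

Lemma smeanE (F : 'I_n -> T -> R) : smean F = n%:R^-1 \o* \sum_(i < n) F i.
Proof. by apply/funext => t /=; rewrite fct_sumE mulrC. Qed.

Let Lfun_copy f (r : R) i : measurable_fun setT f ->
  f \o V0 \in Lfun P r%:E -> f \o V i \in Lfun P r%:E.
Proof. exact: Lfun_same_law. Qed.

Lemma Ex_smean_iid f : measurable_fun setT f -> f \o V0 \in Lfun P 1 ->
  Ex P (smean (fun i => f \o V i)) = Ex P (f \o V0).
Proof.
move=> mf f1; have fi1 i := Lfun_copy i mf f1.
rewrite smeanE ExZ ?rpred_sum// Ex_sum//.
under eq_bigr => i _ do rewrite /Ex (expectation_same_law (mV i) mV0 (V_law i) mf) -/(Ex P _).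
by rewrite sumr_const card_ord -(mulr_natl (Ex P _)) mulKf.
Qed.

Lemma Cov_copies f g i j : measurable_fun setT f -> measurable_fun setT g ->
  f \o V0 \in L2 -> g \o V0 \in L2 ->
  Cov P (f \o V i) (g \o V j) = if i == j then Cov P (f \o V0) (g \o V0) else 0.
Proof.
move=> mf mg f2 g2; have [<-|ij] := eqVneq i j.
  by rewrite /Cov (covariance_same_law (mV i) mV0 (V_law i)).
rewrite CovE ?Lfun_copy// /Ex expectationM_independent ?Lfun2_Lfun1 ?Lfun_copy//.
- by rewrite fineM ?subrr// expectation_fin_num// Lfun2_Lfun1// Lfun_copy.
- exact: measurableT_comp.
- exact: measurableT_comp.
- exact: independent_rv_comp (V_indep ij).
Qed.

Lemma Cov_smean_iid f g : measurable_fun setT f -> measurable_fun setT g ->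
  f \o V0 \in L2 -> g \o V0 \in L2 ->
  Cov P (smean (fun i => f \o V i)) (smean (fun i => g \o V i)) =
  Cov P (f \o V0) (g \o V0) / n%:R.
Proof.
move=> mf mg f2 g2; have fi2 i := Lfun_copy i mf f2; have gi2 i := Lfun_copy i mg g2.
rewrite !smeanE CovZl ?Lfun2Z ?rpred_sum ?lee1n// CovZr ?rpred_sum ?lee1n//.
rewrite Cov_suml ?rpred_sum ?lee1n//.
under eq_bigr => i _ do rewrite CovC Cov_suml//.
under eq_bigr => i _ do under eq_bigr => j _ do rewrite CovC Cov_copies//.
rewrite (eq_bigr (fun=> Cov P (f \o V0) (g \o V0))); last first.
  by move=> i _; rewrite (bigD1 i)//= eqxx big1 ?addr0// => j; rewrite eq_sym => /negbTE ->.
by rewrite sumr_const card_ord -(mulr_natl (Cov P _ _)) mulKf// mulrC.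
Qed.

Lemma Phi_smean_iid f g : measurable_fun setT f -> measurable_fun setT g ->
  f \o V0 \in L2 -> g \o V0 \in L2 ->
  Phi P (smean (fun i => f \o V i)) (smean (fun i => g \o V i)) =
  Phi P (f \o V0) (g \o V0) / n%:R.
Proof.
move=> mf mg f2 g2.
by rewrite /Phi /Var !Ex_smean_iid ?Lfun2_Lfun1// -!/(Cov _ _ _) !Cov_smean_iid//; ring.
Qed.

Lemma smean_control_variate (F G : 'I_n -> T -> R) a k :
  (fun t => smean F t + a * (k - smean G t)) = smean (fun i t => F i t + a * (k - G i t)).
Proof.
apply/funext => t; rewrite /smean big_split /= -mulr_sumr sumrB sumr_const card_ord.
by rewrite -mulr_natl; field.
Qed.

Lemma Phi_smean_control_variates (fA fB fC fD : S -> R) a b :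
  measurable_fun setT fA -> measurable_fun setT fB ->
  measurable_fun setT fC -> measurable_fun setT fD ->
  fA \o V0 \in L2 -> fB \o V0 \in L2 -> fC \o V0 \in L2 -> fD \o V0 \in L2 ->
  let eB := Ex P (fB \o V0) in let eD := Ex P (fD \o V0) in
  Phi P (fun t => smean (fun i => fA \o V i) t + a * (eB - smean (fun i => fB \o V i) t))
        (fun t => smean (fun i => fC \o V i) t + b * (eD - smean (fun i => fD \o V i) t)) =
  Phi P (fun t => fA (V0 t) + a * (eB - fB (V0 t)))
        (fun t => fC (V0 t) + b * (eD - fD (V0 t))) / n%:R.
Proof.
move=> mA mB mC mD A2 B2 C2 D2 eB eD; rewrite !smean_control_variate.
have mcv (f g : S -> R) c k : measurable_fun setT f -> measurable_fun setT g ->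
    measurable_fun setT (fun s => f s + c * (k - g s)).
  move=> mf mg; apply: measurable_funD => //.
  by apply: measurable_funM => //; exact: measurable_funB.
apply: (Phi_smean_iid (f := fun s => fA s + a * (eB - fB s))
                      (g := fun s => fC s + b * (eD - fD s))).
- exact: mcv.
- exact: mcv.
- exact: Lfun2_control_variate.
- exact: Lfun2_control_variate.
Qed.

End iid_sample_mean.

Lemma Lfun_measurable d (T : measurableType d) (R : realType) (P : probability T R)
  (X : T -> R) r : X \in Lfun P r -> measurable_fun setT X.
Proof. by rewrite inE => /andP[]; rewrite inE. Qed.

Lemma measurable_vec4 d (T : measurableType d) (R : realType) (A B C D : T -> R) :
  measurable_fun setT A -> measurable_fun setT B ->
  measurable_fun setT C -> measurable_fun setT D -> measurable_fun setT (vec4 A B C D).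
Proof. by move=> mA mB mC mD; do 3 apply: measurable_fun_pair => //. Qed.

Section iid_copies.
Context d (T : measurableType d) (R : realType) (P : probability T R).
Local Notation L2 := (Lfun P 2%:E).
Variables (n : nat) (A B C D : T -> R) (Ai Bi Ci Di : 'I_n -> T -> R).
Hypotheses (n_gt0 : (0 < n)%N) (A2 : A \in L2) (B2 : B \in L2) (C2 : C \in L2) (D2 : D \in L2)
  (iid : iid_copies P A B C D Ai Bi Ci Di).

Let V i := vec4 (Ai i) (Bi i) (Ci i) (Di i).
Let V0 := vec4 A B C D.

Let mV i : measurable_fun setT (V i).
Proof. by have [mA [mB [mC mD]]] := iid.1 i; exact: measurable_vec4. Qed.

Let mV0 : measurable_fun setT V0.
Proof.
exact: measurable_vec4 (Lfun_measurable A2) (Lfun_measurable B2)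
  (Lfun_measurable C2) (Lfun_measurable D2).
Qed.

Let V_law i : same_law P (V i) V0. Proof. exact: iid.2.1. Qed.

Let V_indep : forall i j, i != j -> independent_rv P (V i) (V j).
Proof. exact: (independent_rv_pairwise (V := V) iid.2.2). Qed.

(* The copies Ai i, ..., Di i are, definitionally, the coordinates of V i. *)
Let mpA : measurable_fun setT (fun v : R * R * R * R => v.1.1.1) :=
  measurableT_comp measurable_fst (measurableT_comp measurable_fst measurable_fst).
Let mpB : measurable_fun setT (fun v : R * R * R * R => v.1.1.2) :=
  measurableT_comp measurable_snd (measurableT_comp measurable_fst measurable_fst).
Let mpC : measurable_fun setT (fun v : R * R * R * R => v.1.2) :=
  measurableT_comp measurable_snd measurable_fst.
Let mpD : measurable_fun setT (fun v : R * R * R * R => v.2) := measurable_snd.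

Lemma Phi_smean_copies : Phi P (smean Ai) (smean Ci) = Phi P A C / n%:R.
Proof. exact: (Phi_smean_iid n_gt0 mV mV0 V_law V_indep mpA mpC A2 C2). Qed.

Lemma Phi_smean_control_variates_copies a b :
  Phi P (fun t => smean Ai t + a * (Ex P B - smean Bi t))
        (fun t => smean Ci t + b * (Ex P D - smean Di t)) =
  Phi P (fun t => A t + a * (Ex P B - B t)) (fun t => C t + b * (Ex P D - D t)) / n%:R.
Proof.
exact: (Phi_smean_control_variates n_gt0 mV mV0 V_law V_indep a b mpA mpB mpC mpD A2 B2 C2 D2).
Qed.

End iid_copies.

Theorem mainTheorem6 (d : measure_display) (T : measurableType d)
  (R : realType) (P : probability T R) (A B C D : T -> R)
  (hA : A \in Lfun P 2%:E) (hB : B \in Lfun P 2%:E)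
  (hC : C \in Lfun P 2%:E) (hD : D \in Lfun P 2%:E)
  (hVB : 0 < Var P B) (hVD : 0 < Var P D)
  (hcorr : `|Corr P B D| < 1)
  (hEA : Ex P A != 0) (hEC : Ex P C != 0)
  (n : nat) (hn : (0 < n)%N) (Ai Bi Ci Di : 'I_n -> T -> R)
  (hiid : iid_copies P A B C D Ai Bi Ci Di) :
  let Rr := Ex P A / Ex P C in
  let den := Var P B * Var P D - Cov P B D ^+ 2 in
  let alpha_o := (Var P D * Cov P A B - Rr * Var P D * Cov P B C
                  + Rr * Cov P B D * Cov P C D - Cov P B D * Cov P A D) / den in
  let beta_o := (Cov P B D * Cov P A B - Rr * Cov P B D * Cov P B C
                 + Rr * Var P B * Cov P C D - Var P B * Cov P A D) / (Rr * den) in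
  let N := fun t => smean Ai t + alpha_o * (Ex P B - smean Bi t) in
  let M := fun t => smean Ci t + beta_o * (Ex P D - smean Di t) in
  let W := fun t => (Rr * Cov P B C - Cov P A B) * D t
                    - (Rr * Cov P C D - Cov P A D) * B t in
  Phi P N M - Phi P (smean Ai) (smean Ci)
    = - (n%:R * Ex P C ^+ 2)^-1 * (Var P W / den)
  /\ - (n%:R * Ex P C ^+ 2)^-1 * (Var P W / den) <= 0.
Proof.
move=> r den alpha_o beta_o N M W.
have den_gt0 : 0 < den by rewrite subr_gt0 Cov_sqr_lt_VarM.
have Phi_opt := Phi_optimal_control_variates hA hB hC hD hEA hEC den_gt0.
rewrite /= -/r -/den -/alpha_o -/beta_o -/W in Phi_opt.
have nEC2_gt0 : 0 < n%:R * Ex P C ^+ 2 by rewrite mulr_gt0 ?ltr0n// exprn_even_gt0.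
rewrite (Phi_smean_control_variates_copies hn hA hB hC hD hiid).
rewrite (Phi_smean_copies hn hA hB hC hD hiid) -mulrBl Phi_opt.
split; first by field; rewrite hEC gt_eqF// pnatr_eq0 -lt0n.
by rewrite mulNr oppr_le0 mulr_ge0 ?invr_ge0 ?divr_ge0 ?Var_ge0 ?ltW.
Qed.
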